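(* Let $\tau\in\mathcal{P}^\pm$, $\alpha,\beta\in\mathbb{R}$, and suppose $T_{\mathrm{ng}}=T_{\mathrm{ng}}(\tau;\alpha,\beta)$ is an exceptional Jacobi operator; let $T_{\mathrm{rg}}=T_{\mathrm{rg}}(\tau;\alpha,\beta)$ and $N=\deg\tau$. Every quasi-polynomial eigenfunction of $T_{\mathrm{rg}}$ has the form $\pi_k(x)=P_n(x)/\tau(x)$ with $k\in I_1(T_{\mathrm{rg}})$, $k=n-N$, where $P_n\in\mathcal{P}^\pm$ is an eigenpolynomial of $T_{\mathrm{ng}}$ of degree $n$. Moreover, if $\alpha,\beta\notin\mathbb{Z}_-$, then $I_1(T_{\mathrm{rg}})=I(T_{\mathrm{ng}})-N$ and $\sigma_{\mathcal{P}}(T_{\mathrm{ng}})=\sigma_1(T_{\mathrm{rg}})=\{k(k+\alpha+\beta+1):k\in I_1(T_{\mathrm{rg}})\}$.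
   Context: $D=d/dx$; $\mathcal{P}^\pm$ denotes the set of real polynomials not vanishing at $x=\pm1$; $\mathbb{Z}_-=\{-1,-2,\ldots\}$. $\eta(x;\alpha,\beta)=\frac{\alpha+1}{x-1}+\frac{\beta+1}{x+1}$; $T_{\mathrm{ng}}(\tau;\alpha,\beta)=(x^2-1)\big(D^2-2\frac{\tau'}{\tau}D+\frac{\tau''}{\tau}+\eta(D-\frac{\tau'}{\tau})\big)+2x\frac{\tau'}{\tau}$; $T_{\mathrm{rg}}(\tau;\alpha,\beta)=\tau^{-1}\circ T_{\mathrm{ng}}(\tau;\alpha,\beta)\circ\tau$. An eigenpolynomial of an operator $T$ is a nonzero polynomial $P$ with $TP=\lambda P$ for a constant $\lambda$; $\sigma_{\mathcal{P}}(T)$ is the set of such $\lambda$ and $I(T)$ the set of degrees of eigenpolynomials. $T_{\mathrm{ng}}$ is exceptional if $\mathbb{N}_0\setminus I(T_{\mathrm{ng}})$ is finite. A quasi-polynomial eigenfunction of $T$ is a rational solution $\pi$ of $T\pi=\lambda\pi$ with no zeros or poles at $x=\pm1$; its degree is the degree of the numerator minus that of the denominator; $I_1(T)$ is the set of such degrees and $\sigma_1(T)$ the set of corresponding eigenvalues. *)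

From HB Require Import structures.
From mathcomp Require Import all_boot all_order all_algebra.
From mathcomp Require Import boolp classical_sets cardinality reals.
Set Implicit Arguments. Unset Strict Implicit. Unset Printing Implicit Defensive.
Import Order.TTheory GRing.Theory Num.Theory.
Local Open Scope ring_scope.
Local Open Scope classical_set_scope.

Section Jacobi.
Variable R : realType.

Definition ratf := {fraction {poly R}}.

Definition polyF (p : {poly R}) : ratf := @FracField.tofrac _ p.
Definition cstF (c : R) : ratf := polyF c%:P.
Definition xF : ratf := polyF 'X.

Definition fderiv (f : ratf) : ratf :=
  let r := repr f in
  polyF ((\n_r)^`() * \d_r - \n_r * (\d_r)^`()) / polyF (\d_r ^+ 2).

Definition fdeg (f : ratf) : int :=
  let r := repr f in (size \n_r)%:Z - (size \d_r)%:Z.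

Definition Ppm (p : {poly R}) : Prop := p.[1] != 0 /\ p.[-1] != 0.

Definition eta (a b : R) : ratf :=
  cstF (a + 1) / (xF - 1) + cstF (b + 1) / (xF + 1).

Definition Tng (tau : {poly R}) (a b : R) (f : ratf) : ratf :=
  let t := polyF tau in
  let t1 := polyF tau^`() in
  let t2 := polyF tau^`(2) in
  (xF ^+ 2 - 1) *
    (fderiv (fderiv f) - 2%:R * (t1 / t) * fderiv f + (t2 / t) * f
     + eta a b * (fderiv f - (t1 / t) * f))
  + 2%:R * xF * (t1 / t) * f.

Definition Trg (tau : {poly R}) (a b : R) (f : ratf) : ratf :=
  (polyF tau)^-1 * Tng tau a b (polyF tau * f).

Definition is_eigpoly (T : ratf -> ratf) (P : {poly R}) (lam : R) : Prop :=
  P != 0 /\ T (polyF P) = cstF lam * polyF P.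

Definition sigmaP (T : ratf -> ratf) : set R :=
  [set lam | exists P, is_eigpoly T P lam].

Definition Ipoly (T : ratf -> ratf) : set nat :=
  [set n | exists P lam, is_eigpoly T P lam /\ (size P).-1 = n].

Definition exceptional (T : ratf -> ratf) : Prop := finite_set (~` Ipoly T).

Definition is_qpeig (T : ratf -> ratf) (pi : ratf) (lam : R) : Prop :=
  (exists p q : {poly R}, Ppm p /\ Ppm q /\ pi = polyF p / polyF q)
  /\ T pi = cstF lam * pi.

Definition I1 (T : ratf -> ratf) : set int :=
  [set k | exists pi lam, is_qpeig T pi lam /\ fdeg pi = k].

Definition sigma1 (T : ratf -> ratf) : set R :=
  [set lam | exists pi, is_qpeig T pi lam].

End Jacobi.

From Pilot Require Import Defs.
From HB Require Import structures.
From mathcomp Require Import all_boot all_order all_algebra.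
From mathcomp Require Import boolp classical_sets cardinality reals.
From mathcomp Require Import polyorder ring lra zify.
Import Order.TTheory GRing.Theory Num.Theory.
Set Implicit Arguments. Unset Strict Implicit. Unset Printing Implicit Defensive.
Local Open Scope ring_scope.
Local Open Scope classical_set_scope.

(* Multiplying T_ng y = lam y by tau gives a second order equation
   (x^2-1) tau y'' + p1 y' + p0 y = 0 with polynomial coefficients.  Near an
   irreducible g, write y = g^k phi with phi a unit at g: the lowest order
   term of the equation is the indicial polynomial at k times a unit, so that
   polynomial vanishes modulo g.  If y = tau pi had a pole at a factor g of
   its denominator (g prime to x^2-1, tau = g^m t, k = -r < 0) the indicial
   value would be ((r+m)(r+m-1) + 2r) (x^2-1) g'^2 t, which g does not divide:
   so tau pi is a polynomial P.  At x = 1 the indicial polynomial is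
   k(k+alpha), so for alpha not in Z_- an eigenpolynomial does not vanish at
   1 (similarly at -1 with beta), which makes P/tau quasi-polynomial.
   Comparing the coefficients of x^(n+N) gives lam = k(k+alpha+beta+1) with
   k = n - N. *)

Section PolyFactors.
Variable K : fieldType.
Implicit Types p q g : {poly K}.

Lemma exists_irreducible_dvdp p :
  (1 < size p)%N -> exists2 g, irreducible_poly g & g %| p.
Proof.
elim: {p}(size p) {-2}p (leqnn (size p)) => [|n IHn] p sp p1; first by case: (size p) sp p1.
have p0 : p != 0 by rewrite -size_poly_gt0 ltnW.
have [[q [sq1 qp Nqp]] | Nq] :=
  pselect (exists q, [/\ size q != 1, q %| p & ~~ (q %= p)]); last first.
  exists p => //; split=> // q sq1 qp; apply/negPn/negP => Nqp.
  by apply: Nq; exists q.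
have q0 : q != 0 by apply: contraNneq p0 => q0; rewrite -dvd0p -q0.
have q1 : (1 < size q)%N by rewrite ltn_neqAle eq_sym sq1 size_poly_gt0.
have sqp : (size q < size p)%N by rewrite ltn_neqAle (dvdp_size_eqp qp) Nqp dvdp_leq.
have [|g irr_g gq] := IHn q _ q1; first by rewrite -ltnS (leq_trans sqp).
by exists g => //; apply: dvdp_trans qp.
Qed.

Lemma multiplicity_poly g p : (1 < size g)%N -> p != 0 ->
  exists m q, ~~ (g %| q) /\ p = g ^+ m * q.
Proof.
move=> g1; elim: {p}(size p) {-2}p (leqnn (size p)) => [|n IHn] p sp p0.
  by move: p0; rewrite -size_poly_gt0; case: (size p) sp.
have [gp | Ngp] := boolP (g %| p); last by exists 0%N, p; rewrite expr0 mul1r.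
have g0 : g != 0 by rewrite -size_poly_gt0 ltnW.
have q0 : p %/ g != 0 by apply: contraNneq p0 => e; rewrite -(divpK gp) e mul0r.
have sq : (size (p %/ g)%R <= n)%N.
  rewrite size_divp // leq_subLR (leq_trans sp) // -add1n leq_add2r.
  by rewrite -subn1 subn_gt0.
have [m [q [Ngq e]]] := IHn _ sq q0.
by exists m.+1, q; split=> //; rewrite -(divpK gp) e exprS; ring.
Qed.
End PolyFactors.

Section PolyDeriv.
Variable R : realDomainType.
Implicit Types p q g : {poly R}.

Lemma coefM_top p q i j : (size p <= i.+1)%N -> (size q <= j.+1)%N ->
  (p * q)`_(i + j) = p`_i * q`_j.
Proof.
move=> sp sq; rewrite coefM (bigD1 (Ordinal (ltn_addr j (ltnSn i)))) //= addKn.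
rewrite big1 ?addr0 // => -[k /= lt_k] /eqP neq_k.
have [lt_ki | lt_ik | eq_ki] := ltngtP k i; last by case: neq_k; exact: val_inj.
  by rewrite [q`_ _]nth_default ?mulr0 // (leq_trans sq) //; lia.
by rewrite [p`_ _]nth_default ?mul0r // (leq_trans sp).
Qed.

Lemma size_deriv_le p : (size p^`() <= size p)%N.
Proof. by rewrite size_deriv leq_pred. Qed.

Lemma size_derivn2_le p : (size p^`(2) <= size p)%N.
Proof. exact: leq_trans (size_deriv_le _) (size_deriv_le _). Qed.

Lemma size_Xderiv p : (size ('X * p^`())%R <= size p)%N.
Proof.
have [-> | p'0] := eqVneq p^`() 0; first by rewrite mulr0 size_poly0.
have p0 : p != 0 by apply: contraNneq p'0 => ->; rewrite deriv0.
by rewrite mulrC size_mulX // size_deriv prednK // size_poly_gt0.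
Qed.

Lemma size_X2derivn2 p : (size ('X ^+ 2 * p^`(2))%R <= size p)%N.
Proof.
have [-> | p''0] := eqVneq p^`(2) 0; first by rewrite mulr0 size_poly0.
rewrite mulrC size_mulXn //.
move: p''0; rewrite -[p^`(2)]/(p^`()^`()) -size_poly_gt0 !size_deriv.
by case: (size p) => [|[|[|k]]].
Qed.

Lemma coef_deriv_top p i : (size p <= i.+1)%N -> p^`()`_i = 0.
Proof. by move=> sp; rewrite coef_deriv nth_default ?mul0rn. Qed.

Lemma coef_derivn2_top p i : (size p <= i.+1)%N -> p^`(2)`_i = 0.
Proof. by move=> sp; rewrite coef_derivn nth_default ?mul0rn // (leq_trans sp) ?addn2. Qed.

Lemma coef_Xderiv p i : ('X * p^`())`_i = i%:R * p`_i.
Proof. by rewrite coefXM; case: i => [|i]; rewrite ?mul0r // coef_deriv mulr_natl. Qed.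

Lemma coef_X2derivn2 p i : ('X ^+ 2 * p^`(2))`_i = i%:R * (i%:R - 1) * p`_i.
Proof.
rewrite coefXnM; case: i => [|[|i]] /=; rewrite ?mul0r ?subrr ?mulr0 ?mul0r //.
have -> : i.+2%:R - 1 = i.+1%:R :> R by rewrite -natr1 addrK.
by rewrite subSS subSS subn0 !coef_deriv -mulrnA -[LHS]mulr_natl natrM.
Qed.

Lemma irredp_coprime_deriv g : irreducible_poly g -> coprimep g g^`().
Proof.
move=> irr_g; rewrite irreducible_poly_coprime //.
have g1 := irr_g.1; have g0 := irredp_neq0 irr_g.
apply/negP => /dvdp_leq; rewrite -size_poly_eq0 size_deriv.
by case: (size g) g1 => [|[|n]] //= _ /(_ isT); rewrite ltnn.
Qed.
End PolyDeriv.

HB.instance Definition _ (R : realType) :=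
  GRing.RMorphism.copy (@polyF R) (@FracField.tofrac _).

Section RationalFunctions.
Variable R : realType.
Local Notation F := (ratf R).
Local Notation pF := (@polyF R).
Implicit Types (p q u v : {poly R}) (f h : F).

Lemma polyF_eq0 p : (pF p == 0) = (p == 0).
Proof. exact: tofrac_eq0. Qed.

Lemma polyF_inj : injective pF.
Proof. by move=> p q /eqP; rewrite tofrac_eq => /eqP. Qed.

Lemma ratf_numden f : f = pF \n_(repr f) / pF \d_(repr f).
Proof.
rewrite /polyF; unlock FracField.tofrac.
rewrite /GRing.inv /GRing.mul /= -FracField.pi_inv -FracField.pi_mul.
rewrite /FracField.invf /FracField.mulf /= !numden_Ratio ?oner_neq0 ?denom_ratioP //.
by rewrite mul1r mulr1 Ratio_numden reprK.
Qed.

Lemma ratfP f : exists p q, q != 0 /\ f = pF p / pF q.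
Proof. by exists \n_(repr f), \d_(repr f); rewrite -ratf_numden denom_ratioP. Qed.

Lemma eq_polyF_frac p1 q1 p2 q2 : q1 != 0 -> q2 != 0 ->
  (pF p1 / pF q1 = pF p2 / pF q2) <-> p1 * q2 = p2 * q1.
Proof.
move=> q10 q20; split=> [/eqP | E]; last by apply/eqP; rewrite eqr_div ?polyF_eq0 // -!rmorphM E.
by rewrite eqr_div ?polyF_eq0 // -!rmorphM => /eqP/polyF_inj.
Qed.

Lemma ratf_reduced p q : q != 0 ->
  exists u v, [/\ coprimep u v, v != 0, v %| q & pF p / pF q = pF u / pF v].
Proof.
move=> q0; set d := gcdp p q; set u := p %/ d; set v := q %/ d.
have Eq : q = v * d by rewrite divpK ?dvdp_gcdr.
have v0 : v != 0 by apply: contraNneq q0 => v0; rewrite Eq v0 mul0r.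
exists u, v; split=> //; first by rewrite coprimep_div_gcd // q0 orbT.
  by rewrite Eq dvdp_mulIl.
by apply/eq_polyF_frac => //; rewrite {1}Eq -(divpK (dvdp_gcdl p q)) -/d -/u; ring.
Qed.

Lemma fdeg_frac p q : p != 0 -> q != 0 ->
  fdeg (pF p / pF q) = (size p)%:Z - (size q)%:Z.
Proof.
move=> p0 q0; rewrite /fdeg; set r := repr _.
have d0 : \d_r != 0 := denom_ratioP r.
have /esym/(eq_polyF_frac _ _ d0 q0) E := ratf_numden (pF p / pF q).
move: E d0; rewrite -/r; set n := \n_r; set d := \d_r => E d0.
have n0 : n != 0 by apply: contraTneq (mulf_neq0 p0 d0) => n0; rewrite negbK -E n0 mul0r.
have := congr1 (fun s : {poly R} => (size s).+1) E; rewrite /= !size_mul //.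
rewrite !prednK ?addn_gt0 ?size_poly_gt0 ?n0 ?p0 //.
move: (size n) (size d) (size p) (size q) => x y z w; lia.
Qed.

Lemma fderiv_frac p q : q != 0 ->
  fderiv (pF p / pF q) = pF (p^`() * q - p * q^`()) / pF (q ^+ 2).
Proof.
move=> q0; rewrite /fderiv; set r := repr _.
have d0 : \d_r != 0 := denom_ratioP r.
have /esym/(eq_polyF_frac _ _ d0 q0) E := ratf_numden (pF p / pF q).
move: E d0; rewrite -/r; set n := \n_r; set d := \d_r => E d0.
have E' : n^`() * q + n * q^`() = p^`() * d + p * d^`() by rewrite -!derivM E.
apply/eq_polyF_frac; rewrite ?expf_neq0 //.
apply/eqP; rewrite -subr_eq0; apply/eqP.
transitivity (d * q * ((n^`() * q + n * q^`()) - (p^`() * d + p * d^`()))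
              - (n * q - p * d) * (d^`() * q + q^`() * d)); first by ring.
by rewrite E' E !subrr; ring.
Qed.

Lemma fderiv_poly p : fderiv (pF p) = pF p^`().
Proof.
rewrite -[pF p]divr1 -(rmorph1 pF) fderiv_frac ?oner_neq0 // derivC.
by rewrite !(mulr1, mulr0, subr0, expr1n, rmorph1, divr1).
Qed.

Lemma fderivM f h : fderiv (f * h) = fderiv f * h + f * fderiv h.
Proof.
have [p1 [q1 [q10 ->]]] := ratfP f; have [p2 [q2 [q20 ->]]] := ratfP h.
rewrite mulf_div -!rmorphM !fderiv_frac ?mulf_neq0 // !mulf_div -!rmorphM.
rewrite addf_div ?polyF_eq0 ?mulf_neq0 ?expf_neq0 // -!rmorphM -rmorphD.
by apply/eq_polyF_frac; rewrite ?mulf_neq0 ?expf_neq0 // !derivM; ring.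
Qed.

Lemma fderiv1 : fderiv (1 : F) = 0.
Proof. by rewrite -(rmorph1 pF) -(rmorph1 (@polyC R)) fderiv_poly derivC rmorph0. Qed.

Lemma fderivV f : f != 0 -> fderiv f^-1 = - fderiv f / f ^+ 2.
Proof.
move=> f0; have := fderiv1; rewrite -(mulfV f0) fderivM => /eqP.
rewrite addr_eq0 => /eqP E; apply: (mulfI f0).
rewrite -[f * fderiv f^-1]opprK -E expr2 invfM mulNr mulrN; congr (- _).
by rewrite mulrCA [f * _]mulrA mulfV // mul1r.
Qed.

Lemma fderiv_exprz f (k : int) : f != 0 ->
  f * fderiv (f ^ k) = k%:~R * f ^ k * fderiv f.
Proof.
have fderivX n : f * fderiv (f ^+ n) = n%:R * f ^+ n * fderiv f.
  elim: n => [|n IH]; first by rewrite expr0 fderiv1 !mul0r mulr0.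
  transitivity (f * fderiv f * f ^+ n + f * (f * fderiv (f ^+ n))).
    by rewrite exprS fderivM; ring.
  by rewrite IH -natr1 exprS; ring.
move=> f0; case: k => n; first by rewrite fderivX.
rewrite NegzE -exprnN fderivV ?expf_neq0 //.
have fV : f ^+ n.+1 * (f ^+ n.+1)^-1 = 1 by rewrite mulfV ?expf_neq0.
rewrite mulrA mulrN fderivX intrN -[(_ ^+ 2)^-1]exprVn.
transitivity (- (n.+1%:R * fderiv f / f ^+ n.+1) * (f ^+ n.+1 / f ^+ n.+1)); first by ring.
by rewrite fV mulr1; ring.
Qed.

Definition ode2 (p2 p1 p0 : {poly R}) f : F :=
  pF p2 * fderiv (fderiv f) + pF p1 * fderiv f + pF p0 * f.

Lemma ode2_polyF p2 p1 p0 p :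
  ode2 p2 p1 p0 (pF p) = pF (p2 * p^`(2) + p1 * p^`() + p0 * p).
Proof. by rewrite /ode2 !fderiv_poly !rmorphD !rmorphM. Qed.

(* The localization of R[x] at g: rational functions with a denominator prime
   to g.  When g is irreducible these have no pole at the roots of g. *)
Definition regular_at g : {pred F} :=
  fun f => `[< exists u v, [/\ v != 0, coprimep g v & f = pF u / pF v] >].

Lemma regular_atP g f : reflect
  (exists u v, [/\ v != 0, coprimep g v & f = pF u / pF v]) (f \in regular_at g).
Proof. exact: asboolP. Qed.

Lemma regular_at_subring_closed g : subring_closed (regular_at g).
Proof.
split.
- by apply/regular_atP; exists 1, 1; rewrite oner_neq0 coprimep1 divr1.
- move=> _ _ /regular_atP[u1 [v1 [v10 c1 ->]]] /regular_atP[u2 [v2 [v20 c2 ->]]].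
  apply/regular_atP; exists (u1 * v2 - u2 * v1), (v1 * v2).
  by rewrite mulf_neq0 // coprimepMr c1 c2 rmorphB !rmorphM -!mulNr addf_div ?polyF_eq0.
- move=> _ _ /regular_atP[u1 [v1 [v10 c1 ->]]] /regular_atP[u2 [v2 [v20 c2 ->]]].
  apply/regular_atP; exists (u1 * u2), (v1 * v2).
  by rewrite mulf_neq0 // coprimepMr c1 c2 mulf_div !rmorphM.
Qed.

Lemma regular_polyF g p : pF p \in regular_at g.
Proof. by apply/regular_atP; exists p, 1; rewrite oner_neq0 coprimep1 rmorph1 divr1. Qed.

Lemma regular_fderiv g f : f \in regular_at g -> fderiv f \in regular_at g.
Proof.
case/regular_atP=> u [v [v0 c ->]]; apply/regular_atP.
exists (u^`() * v - u * v^`()), (v ^+ 2).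
by rewrite expf_neq0 // coprimep_expr // fderiv_frac.
Qed.
End RationalFunctions.

HB.instance Definition _ (R : realType) (g : {poly R}) :=
  GRing.isSubringClosed.Build (ratf R) (regular_at g) (regular_at_subring_closed g).

Ltac regular_closure := repeat match goal with
  | |- is_true (in_mem (_ + _) _) => apply: rpredD
  | |- is_true (in_mem (- _) _) => rewrite rpredN
  | |- is_true (in_mem (_ * _) _) => apply: rpredM
  | |- is_true (in_mem (_ ^+ _) _) => apply: rpredX
  | |- is_true (in_mem 1 _) => apply: rpred1
  | |- is_true (in_mem (_%:~R) _) => apply: rpred_int
  | |- is_true (in_mem (_%:R) _) => apply: rpred_nat
  | |- is_true (in_mem (fderiv _) _) => apply: regular_fderiv
  | |- is_true (in_mem (polyF _) _) => apply: regular_polyF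
  | |- is_true (in_mem (xF _) _) => apply: regular_polyF
  | |- is_true (in_mem (cstF _) _) => apply: regular_polyF
  | |- _ => assumption
  end.

Section Indicial.
Variable R : realType.
Local Notation F := (ratf R).
Local Notation pF := (@polyF R).
Variable g : {poly R}.
Hypothesis g_nonconst : (1 < size g)%N.
Local Notation regular := (regular_at g).
Local Notation G := (pF g).
Local Notation G' := (pF g^`()).

Let G_neq0 : G != 0.
Proof. by rewrite polyF_eq0 -size_poly_gt0 ltnW. Qed.

Lemma regular_dvdp p q z : coprimep g q -> z \in regular ->
  pF p / pF q = G * z -> g %| p.
Proof.
move=> cq /regular_atP[u [v [v0 cv ->]]].
have q0 : q != 0.
  by apply: contraTneq cq => ->; rewrite coprimep0 -size_poly_eq1 gtn_eqF.
rewrite mulrA -rmorphM => /eq_polyF_frac-/(_ q0 v0) E.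
by rewrite -(Gauss_dvdpl _ cv) E -mulrA dvdp_mulIl.
Qed.

Lemma fderiv_exprz_mul (k : int) f :
  G * fderiv (G ^ k * f) = G ^ k * (k%:~R * G' * f + G * fderiv f).
Proof. by rewrite fderivM mulrDr mulrA fderiv_exprz // fderiv_poly; ring. Qed.

Lemma fderiv2_exprz_mul (k : int) f : f \in regular -> exists2 z, z \in regular &
  G ^+ 2 * fderiv (fderiv (G ^ k * f)) = G ^ k * ((k * (k - 1))%:~R * G' ^+ 2 * f + G * z).
Proof.
move=> reg_f; set w := k%:~R * G' * f + G * fderiv f.
exists ((k - 1)%:~R * G' * fderiv f + fderiv w); first by rewrite /w; regular_closure.
have E := congr1 (@fderiv R) (fderiv_exprz_mul k f).
rewrite -/w fderivM fderiv_poly in E.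
transitivity (G * (G' * fderiv (G ^ k * f) + G * fderiv (fderiv (G ^ k * f)))
              - G' * (G * fderiv (G ^ k * f))); first by ring.
by rewrite E (fderiv_exprz_mul k w) (fderiv_exprz_mul k f) /w intrM intrB; ring.
Qed.

(* Indicial equation at g: for y = g^k u/v with u, v prime to g, and
   coefficients of orders (e, e-1, e-2) at g with leading parts w2, w1, w0,
   the equation forces k(k-1) g'^2 w2 + k g' w1 + w0 = 0 modulo g. *)
Lemma indicial_dvdp (k : int) u v (p2 p1 p0 w2 w1 w0 : {poly R}) (S r2 r1 r0 : F) :
  coprimep g u -> coprimep g v -> v != 0 -> S != 0 ->
  r2 \in regular -> r1 \in regular -> r0 \in regular ->
  pF p2 = S * (pF w2 + G * r2) ->
  G * pF p1 = S * (pF w1 + G * r1) ->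
  G ^+ 2 * pF p0 = S * (pF w0 + G * r0) ->
  ode2 p2 p1 p0 (G ^ k * (pF u / pF v)) = 0 ->
  g %| (k * (k - 1))%:~R * g^`() ^+ 2 * w2 + k%:~R * g^`() * w1 + w0.
Proof.
move=> cu cv v0 S0 reg2 reg1 reg0 E2 E1 E0 ode0.
set phi := pF u / pF v; set I := (X in g %| X).
have reg_phi : phi \in regular by apply/regular_atP; exists u, v.
have [z reg_z Ephi2] := fderiv2_exprz_mul k reg_phi.
pose Z := r2 * ((k * (k - 1))%:~R * G' ^+ 2 * phi) + (pF w2 + G * r2) * z
  + r1 * (k%:~R * G' * phi) + (pF w1 + G * r1) * fderiv phi + r0 * phi.
have key : G ^+ 2 * ode2 p2 p1 p0 (G ^ k * phi) = S * G ^ k * (pF I * phi + G * Z).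
  transitivity (pF p2 * (G ^+ 2 * fderiv (fderiv (G ^ k * phi)))
     + (G * pF p1) * (G * fderiv (G ^ k * phi)) + (G ^+ 2 * pF p0) * (G ^ k * phi)).
    by rewrite /ode2; ring.
  have -> : pF I = (k * (k - 1))%:~R * G' ^+ 2 * pF w2 + k%:~R * G' * pF w1 + pF w0.
    by rewrite !(rmorphD, rmorphM, rmorphXn, rmorph_int).
  by rewrite Ephi2 fderiv_exprz_mul E2 E1 E0 /Z; ring.
have SG0 : S * G ^ k != 0 by apply: mulf_neq0 S0 _; apply: expfz_neq0.
move: key; rewrite ode0 mulr0 => /esym/eqP; rewrite mulf_eq0 (negPf SG0) orFb addr_eq0.
rewrite /phi mulrA -rmorphM -mulrN => /eqP/(regular_dvdp cv) dvd_Iu.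
by rewrite -(Gauss_dvdpl _ cu) dvd_Iu // /Z; regular_closure.
Qed.
End Indicial.

Section JacobiOperator.
Variable R : realType.
Local Notation F := (ratf R).
Local Notation pF := (@polyF R).
Variables (tau : {poly R}) (a b : R).

Definition eta_num : {poly R} := (a + 1)%:P * ('X + 1) + (b + 1)%:P * ('X - 1).

Definition jacobi2 : {poly R} := ('X ^+ 2 - 1) * tau.
Definition jacobi1 : {poly R} := eta_num * tau - 2%:R * ('X ^+ 2 - 1) * tau^`().
Definition jacobi0 (lam : R) : {poly R} :=
  ('X ^+ 2 - 1) * tau^`(2) - eta_num * tau^`() + 2%:R * 'X * tau^`() - lam%:P * tau.
Definition jacobi_ode (lam : R) : F -> F := ode2 jacobi2 jacobi1 (jacobi0 lam).

Lemma eta_numE : (xF R ^+ 2 - 1) * Defs.eta a b = pF eta_num.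
Proof.
have xm1 : xF R - 1 != 0.
  by rewrite -(rmorph1 pF) -rmorphB polyF_eq0 -polyC1 polyXsubC_eq0.
have xp1 : xF R + 1 != 0.
  by rewrite -(rmorph1 pF) -rmorphD polyF_eq0 -size_poly_gt0 -polyC1 size_XaddC.
transitivity (cstF (a + 1) * (xF R + 1) * ((xF R - 1) / (xF R - 1))
            + cstF (b + 1) * (xF R - 1) * ((xF R + 1) / (xF R + 1))).
  by rewrite /Defs.eta; ring.
rewrite (divff xm1) (divff xp1) !mulr1 /eta_num /cstF /xF.
by rewrite -(rmorph1 pF) -!rmorphD -!rmorphB -!rmorphM -rmorphD.
Qed.

Lemma polyF_jacobi2 : pF jacobi2 = (xF R ^+ 2 - 1) * pF tau.
Proof. by rewrite rmorphM rmorphB rmorphXn rmorph1. Qed.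

Lemma polyF_jacobi1 :
  pF jacobi1 = pF eta_num * pF tau - 2%:R * (xF R ^+ 2 - 1) * pF tau^`().
Proof. by rewrite rmorphB !rmorphM rmorphB rmorphXn rmorph1 rmorph_nat. Qed.

Lemma polyF_jacobi0 lam : pF (jacobi0 lam) = (xF R ^+ 2 - 1) * pF tau^`(2)
  - pF eta_num * pF tau^`() + 2%:R * xF R * pF tau^`() - cstF lam * pF tau.
Proof. by rewrite rmorphB rmorphD rmorphB !rmorphM rmorphB rmorphXn rmorph1 rmorph_nat. Qed.

Lemma Tng_eigenE lam f : tau != 0 ->
  Tng tau a b f = cstF lam * f <-> jacobi_ode lam f = 0.
Proof.
move=> tau0; have t0 : pF tau != 0 by rewrite polyF_eq0.
set t1 := pF tau^`(); set t2 := pF tau^`(2); set X2 := xF R ^+ 2 - 1.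
set Q := X2 * (t2 * f - 2%:R * t1 * fderiv f - Defs.eta a b * t1 * f) + 2%:R * xF R * t1 * f.
have tauTng : pF tau * (Tng tau a b f - cstF lam * f) = jacobi_ode lam f.
  (* [field] does not terminate on [ratf R]: the cancellation of
     pF tau / pF tau is isolated in the summand with factor Q. *)
  transitivity (X2 * pF tau * fderiv (fderiv f)
      + ((X2 * Defs.eta a b) * pF tau - 2%:R * X2 * t1) * fderiv f
      + (X2 * t2 - (X2 * Defs.eta a b) * t1 + 2%:R * xF R * t1 - cstF lam * pF tau) * f
      + (pF tau / pF tau - 1) * Q).
    by rewrite /Tng /Q; cbv zeta; rewrite -/t1 -/t2 -/X2; ring.
  rewrite (divff t0) subrr mul0r addr0 eta_numE /jacobi_ode /ode2.
  by rewrite polyF_jacobi2 polyF_jacobi1 polyF_jacobi0 -/t1 -/t2 -/X2; ring.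
split=> [E | ]; first by rewrite -tauTng E subrr mulr0.
by rewrite -tauTng => /eqP; rewrite mulf_eq0 (negPf t0) subr_eq0 => /eqP.
Qed.

Section GadicCoefficients.
Variables (g t : {poly R}) (m : nat).
Hypotheses (g_nonconst : (1 < size g)%N) (tauE : tau = g ^+ m * t).
Local Notation G := (pF g).
Local Notation G' := (pF g^`()).
Local Notation regular := (regular_at g).

Lemma jacobi_coefs_gadic lam : exists r1 r0, [/\ r1 \in regular, r0 \in regular,
  G * pF jacobi1 =
    G ^+ m * (pF (- (2 * m)%:R * ('X ^+ 2 - 1) * g^`() * t) + G * r1) &
  G ^+ 2 * pF (jacobi0 lam) =
    G ^+ m * (pF ((m%:Z * (m%:Z - 1))%:~R * ('X ^+ 2 - 1) * g^`() ^+ 2 * t) + G * r0)].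
Proof.
set X2 := xF R ^+ 2 - 1; set E := pF eta_num; set T := pF t.
have Etau : pF tau = G ^+ m * T by rewrite tauE rmorphM rmorphXn.
have E1 : G * pF tau^`() = G ^+ m * (m%:R * G' * T + G * fderiv T).
  by rewrite -fderiv_poly Etau exprnP fderiv_exprz_mul.
have [z reg_z Ez] := fderiv2_exprz_mul g_nonconst m (regular_polyF g t).
have E2 : G ^+ 2 * pF tau^`(2) = G ^+ m * ((m%:Z * (m%:Z - 1))%:~R * G' ^+ 2 * T + G * z).
  have -> : pF tau^`(2) = fderiv (fderiv (pF tau)) by rewrite !fderiv_poly.
  by rewrite Etau; exact: Ez.
exists (E * T - 2%:R * X2 * fderiv T).
exists (X2 * z + (2%:R * xF R - E) * (m%:~R * G' * T + G * fderiv T) - cstF lam * G * T).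
split; try by rewrite /X2 /E /T; regular_closure.
- have -> : pF (- (2 * m)%:R * ('X ^+ 2 - 1) * g^`() * t) = - (2 * m)%:R * X2 * G' * T.
    by rewrite !rmorphM rmorphN rmorph_nat rmorphB rmorphXn rmorph1.
  rewrite polyF_jacobi1 -/X2 -/E.
  transitivity (E * (G * pF tau) - 2%:R * X2 * (G * pF tau^`())); first by ring.
  by rewrite E1 Etau natrM; ring.
- have -> : pF ((m%:Z * (m%:Z - 1))%:~R * ('X ^+ 2 - 1) * g^`() ^+ 2 * t) =
      (m%:Z * (m%:Z - 1))%:~R * X2 * G' ^+ 2 * T.
    by rewrite 3!rmorphM rmorph_int rmorphXn rmorphB rmorphXn rmorph1.
  rewrite polyF_jacobi0 -/X2 -/E.
  transitivity (X2 * (G ^+ 2 * pF tau^`(2)) + (2%:R * xF R - E) * G * (G * pF tau^`())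
    - cstF lam * G ^+ 2 * pF tau); first by ring.
  by rewrite E2 E1 Etau; ring.
Qed.
End GadicCoefficients.

Lemma jacobi_ode_no_pole lam g u v : tau != 0 -> irreducible_poly g ->
  ~~ root g 1 -> ~~ root g (-1) -> coprimep u v -> v != 0 -> g %| v ->
  jacobi_ode lam (pF u / pF v) != 0.
Proof.
move=> tau0 irr_g g_1 g_N1 cuv v0 gv; apply/eqP => ode0; have g1 := irr_g.1.
have coprime_g h : ~~ (g %| h) -> coprimep g h by rewrite irreducible_poly_coprime.
have [r [H [NgH vE]]] := multiplicity_poly g1 v0.
have [m [t [Ngt tauE]]] := multiplicity_poly g1 tau0.
have r0 : (0 < r)%N by case: r vE => // vE; move: gv; rewrite vE mul1r (negPf NgH).
have cgu : coprimep g u by rewrite coprimep_sym (coprimep_dvdl gv) // coprimep_sym.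
have H0 : H != 0 by apply: contraNneq v0 => H0; rewrite vE H0 mulr0.
have G0 : pF g != 0 by rewrite polyF_eq0 -size_poly_gt0 ltnW.
have [r1 [r0' [reg1 reg0 E1 E0]]] := jacobi_coefs_gadic g1 tauE lam.
have E2 : pF jacobi2 = pF g ^+ m * (pF (('X ^+ 2 - 1) * t) + pF g * 0).
  by rewrite mulr0 addr0 /jacobi2 tauE mulrCA rmorphM rmorphXn.
have Ef : pF u / pF v = pF g ^ (- r%:Z) * (pF u / pF H).
  by rewrite -exprnN vE rmorphM rmorphXn invfM; ring.
rewrite Ef in ode0.
have := indicial_dvdp g1 cgu (coprime_g _ NgH) H0 (expf_neq0 _ G0) (rpred0 _) reg1 reg0
  E2 E1 E0 ode0.
(* the indicial polynomial k(k-1) - 2mk + m(m-1) at k = -r *)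
pose c : int := r%:Z * (r%:Z + 1) + 2 * r%:Z * m%:Z + m%:Z * (m%:Z - 1).
set I := (X in g %| X -> _).
have -> : I = c%:~R * (('X - 1%:P) * ('X - (-1)%:P) * g^`() ^+ 2 * t).
  by rewrite /I /c polyCN polyC1; ring.
apply/negP; rewrite -irreducible_poly_coprime // -(rmorph_int polyC) mul_polyC.
rewrite coprimepZr.
  rewrite !coprimepMr !coprimep_XsubC irredp_coprime_deriv // coprime_g //.
  by rewrite g_1 g_N1.
have r1' : 1 <= r%:R :> R by rewrite ler1n.
have m0 : 0 <= m%:R :> R by rewrite ler0n.
by rewrite /c !(intrD, intrM, intrB) /=; apply/lt0r_neq0; nra.
Qed.

Lemma jacobi_ode_pole_free lam p q : tau != 0 -> ~~ root q 1 -> ~~ root q (-1) ->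
  jacobi_ode lam (pF p / pF q) = 0 -> exists P, pF p / pF q = pF P.
Proof.
move=> tau0 q_1 q_N1; have q0 : q != 0 by apply: contraNneq q_1 => ->; rewrite root0.
have [u [v [cuv v0 vq ->]]] := ratf_reduced p q0.
have [v1 | v1] := leqP (size v) 1.
  have [c c0 vE] : exists2 c, c != 0 & v = c%:P.
    by apply/size_poly1P; rewrite eqn_leq v1 size_poly_gt0.
  exists (c^-1%:P * u); rewrite -[pF (_ * u)]divr1 -(rmorph1 pF).
  apply/eq_polyF_frac; rewrite ?oner_neq0 //.
  by rewrite vE mulr1 mulrAC -polyCM mulVf // polyC1 mul1r.
have [g irr_g gv] := exists_irreducible_dvdp v1.
have root_g x : ~~ root q x -> ~~ root g x by apply: contra; apply/root_dvdp/(dvdp_trans gv).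
by move/eqP; rewrite (negPf (jacobi_ode_no_pole _ tau0 irr_g (root_g _ q_1) (root_g _ q_N1) cuv v0 gv)).
Qed.

Lemma jacobi_eigpoly_nonroot lam P c ca cb : c ^+ 2 = 1 ->
  eta_num = ca%:P * ('X + c%:P) + cb%:P * ('X - c%:P) ->
  (forall n : nat, ca != - n%:R) -> ~~ root tau c -> P != 0 ->
  jacobi_ode lam (pF P) = 0 -> ~~ root P c.
Proof.
move=> c2 etaE ca_neq tau_c P0 ode0; apply/negP => P_c.
set g := 'X - c%:P; have g1 : (1 < size g)%N by rewrite size_XsubC.
have [r [H]] := multiplicity_XsubC P c; rewrite P0 /= => H_c PE.
have r0 : (0 < r)%N by case: r PE => // PE; move: P_c; rewrite PE mulr1 (negPf H_c).
have X2E : ('X ^+ 2 - 1 : {poly R}) = g * ('X + c%:P).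
  by rewrite /g -subr_sqr -rmorphXn c2 rmorph1.
have E2 : pF jacobi2 = pF g * (pF (('X + c%:P) * tau) + pF g * 0).
  by rewrite mulr0 addr0 -rmorphM /jacobi2 X2E mulrA.
have E1 : pF g * pF jacobi1 = pF g * (pF (ca%:P * ('X + c%:P) * tau)
    + pF g * pF (cb%:P * tau - 2%:R * ('X + c%:P) * tau^`())).
  by rewrite -!rmorphM -rmorphD -rmorphM /jacobi1 etaE X2E /g; congr (_ _); ring.
have E0 : pF g ^+ 2 * pF (jacobi0 lam) = pF g * (pF 0 + pF g * pF (jacobi0 lam)).
  by rewrite rmorph0 add0r mulrA.
have G0 : pF g != 0 by rewrite polyF_eq0 -size_poly_gt0 ltnW.
have EP : pF P = pF g ^ r%:Z * (pF H / pF 1).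
  by rewrite PE rmorphM rmorphXn rmorph1 divr1 mulrC.
rewrite EP in ode0.
have := indicial_dvdp g1 _ (coprimep1 g) (oner_neq0 _) G0 (rpred0 _)
  (regular_polyF _ _) (regular_polyF _ _) E2 E1 E0 ode0.
rewrite coprimep_sym coprimep_XsubC => /(_ H_c).
set W := ('X + c%:P) * tau; set I := (X in g %| X -> _).
have -> : I = (r%:R * (r%:R - 1 + ca))%:P * W.
  by rewrite /I /W /g derivXsubC polyCM polyCD polyCB polyC_natr polyC1; ring.
apply/negP; rewrite -irreducible_poly_coprime; last exact: irredp_XsubC.
rewrite mul_polyC coprimepZr.
  rewrite /W coprimepMr coprimep_sym coprimep_XsubC (coprimep_sym g) coprimep_XsubC.
  rewrite tau_c andbT rootE hornerD hornerX hornerC -mulr2n mulrn_eq0 /=.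
  by apply/eqP => c0; move: c2; rewrite c0 expr0n /=; lra.
rewrite mulf_eq0 negb_or pnatr_eq0 -lt0n r0 /= -(prednK r0) -natr1 addrK addrC addr_eq0.
exact: ca_neq.
Qed.

Lemma jacobi_eigenvalue lam P : tau != 0 -> P != 0 -> jacobi_ode lam (pF P) = 0 ->
  lam = ((size P).-1%:R - (size tau).-1%:R) * ((size P).-1%:R - (size tau).-1%:R + a + b + 1).
Proof.
move=> tau0 P0; rewrite /jacobi_ode ode2_polyF -(rmorph0 pF) => /polyF_inj.
set n := (size P).-1; set N := (size tau).-1.
have sP : size P = n.+1 by rewrite prednK // size_poly_gt0.
have st : size tau = N.+1 by rewrite prednK // size_poly_gt0.
pose ab := a + b + 2; pose ba := a - b.
have -> : jacobi2 * P^`(2) + jacobi1 * P^`() + jacobi0 lam * P =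
    tau * ('X ^+ 2 * P^`(2)) - tau * P^`(2) + ab%:P * (tau * ('X * P^`()))
    + ba%:P * (tau * P^`()) - 2%:R * (('X * tau^`()) * ('X * P^`()))
    + 2%:R * (tau^`() * P^`()) + ('X ^+ 2 * tau^`(2)) * P - tau^`(2) * P
    - ab%:P * (('X * tau^`()) * P) - ba%:P * (tau^`() * P)
    + 2%:R * (('X * tau^`()) * P) - lam%:P * (tau * P).
  by rewrite /jacobi2 /jacobi1 /jacobi0 /eta_num /ab /ba; ring.
move=> /(congr1 (fun p : {poly R} => p`_(N + n))); rewrite coef0.
rewrite !(coefD, coefN, coefCM, mulr_natl, coefMn) !coefM_top; try by
  rewrite -?st -?sP ?(size_deriv_le, size_derivn2_le, size_Xderiv, size_X2derivn2).
rewrite (coef_deriv_top (eq_leq st)) (coef_derivn2_top (eq_leq st)).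
rewrite (coef_deriv_top (eq_leq sP)) (coef_derivn2_top (eq_leq sP)).
rewrite !coef_Xderiv !coef_X2derivn2.
have tP0 : tau`_N * P`_n != 0 by rewrite mulf_neq0 // -lead_coefE lead_coef_eq0.
move=> /eqP; rewrite subr_eq0 => /eqP E; apply: (mulIf tP0); rewrite -E /ab /ba; ring.
Qed.
End JacobiOperator.

Section Eigenfunctions.
Variable R : realType.
Local Notation pF := (@polyF R).
Variables (tau : {poly R}) (a b : R).
Hypothesis tauP : Ppm tau.

Lemma Ppm_neq0 (p : {poly R}) : Ppm p -> p != 0.
Proof. by case=> p1 _; apply: contraNneq p1 => ->; rewrite horner0. Qed.

Let tau0 : tau != 0 := Ppm_neq0 tauP.
Let tauF0 : pF tau != 0. Proof. by rewrite polyF_eq0. Qed.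

Lemma Trg_eigenE f lam : Trg tau a b f = cstF lam * f <->
  Tng tau a b (pF tau * f) = cstF lam * (pF tau * f).
Proof.
rewrite /Trg; split=> E; last by rewrite E mulrCA mulKf.
by rewrite -(mulVKf tauF0 (Tng _ _ _ _)) E mulrCA.
Qed.

Lemma is_eigpolyE P lam :
  is_eigpoly (Tng tau a b) P lam <-> P != 0 /\ jacobi_ode tau a b lam (pF P) = 0.
Proof. by rewrite /is_eigpoly (Tng_eigenE _ _ _ _ tau0). Qed.

Lemma qpeig_eigpoly pi lam : is_qpeig (Trg tau a b) pi lam ->
  exists2 P, Ppm P /\ is_eigpoly (Tng tau a b) P lam & pi = pF P / pF tau.
Proof.
case=> -[p [q [[p1 pN1] [[q1 qN1] ->]]]] /Trg_eigenE.
rewrite mulrA -rmorphM (Tng_eigenE _ _ _ _ tau0) => /[dup] ode0.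
case/(jacobi_ode_pole_free tau0 q1 qN1) => P EP; rewrite EP in ode0.
have q0 : q != 0 := Ppm_neq0 (conj q1 qN1).
move: EP; rewrite -[pF P]divr1 -(rmorph1 pF) => /eq_polyF_frac-/(_ q0 (oner_neq0 _)).
rewrite mulr1 => PE.
have P_pm c : tau.[c] != 0 -> p.[c] != 0 -> q.[c] != 0 -> P.[c] != 0.
  move=> tc pc qc; apply: contraNneq (mulf_neq0 tc pc) => Pc.
  by rewrite -hornerM PE hornerM Pc mul0r.
have PP : Ppm P by split; apply: P_pm; case: tauP.
exists P; first by split; last by apply/is_eigpolyE; split; first exact: Ppm_neq0.
by apply/eq_polyF_frac; rewrite // mulrC PE.
Qed.

Lemma eigpoly_qpeig P lam : Ppm P -> is_eigpoly (Tng tau a b) P lam ->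
  is_qpeig (Trg tau a b) (pF P / pF tau) lam.
Proof.
move=> PP [_ E]; split; first by exists P, tau.
by apply/Trg_eigenE; rewrite mulrCA divff // mulr1.
Qed.

Lemma fdeg_div_tau P : P != 0 ->
  fdeg (pF P / pF tau) = ((size P).-1)%:Z - ((size tau).-1)%:Z.
Proof.
move=> P0; rewrite fdeg_frac //.
have := size_poly_gt0 P; have := size_poly_gt0 tau; rewrite P0 tau0.
by move: (size P) (size tau) => [|x] [|y] //= _ _; lia.
Qed.

Lemma eigpoly_eigenvalue P lam : is_eigpoly (Tng tau a b) P lam ->
  lam = ((size P).-1%:R - (size tau).-1%:R) * ((size P).-1%:R - (size tau).-1%:R + a + b + 1).
Proof. by case/is_eigpolyE => P0; apply: jacobi_eigenvalue. Qed.

Lemma eigpoly_Ppm P lam :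
  (forall m : nat, a != - (m.+1)%:R) -> (forall m : nat, b != - (m.+1)%:R) ->
  is_eigpoly (Tng tau a b) P lam -> Ppm P.
Proof.
move=> aN bN /is_eigpolyE[P0 ode0].
have shift (c : R) m : c != - (m.+1)%:R -> c + 1 != - m%:R.
  by apply: contraNneq => E; rewrite -natr1 opprD -E addrK.
case: tauP => tau1 tauN1; split.
  apply: (jacobi_eigpoly_nonroot (c := 1) (ca := a + 1) (cb := b + 1)) ode0 => //.
  - exact: expr1n.
  - by move=> m; apply: shift.
apply: (jacobi_eigpoly_nonroot (c := -1) (ca := b + 1) (cb := a + 1)) ode0 => //.
- by rewrite sqrrN expr1n.
- by rewrite /eta_num polyCN opprK polyC1 addrC.
- by move=> m; apply: shift.
Qed.
End Eigenfunctions.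

Theorem mainTheorem5 (R : realType) (tau : {poly R}) (a b : R) :
  Ppm tau -> exceptional (Tng tau a b) ->
  (forall (pi : ratf R) (lam : R), is_qpeig (Trg tau a b) pi lam ->
     exists (P : {poly R}) (n : nat),
       Ppm P /\ (exists mu, is_eigpoly (Tng tau a b) P mu) /\ (size P).-1 = n
       /\ pi = polyF P / polyF tau
       /\ I1 (Trg tau a b) (fdeg pi)
       /\ fdeg pi = n%:Z - ((size tau).-1)%:Z) /\
  ((forall m : nat, a != - (m.+1)%:R) -> (forall m : nat, b != - (m.+1)%:R) ->
     I1 (Trg tau a b) = [set (n%:Z - ((size tau).-1)%:Z) | n in Ipoly (Tng tau a b)]
     /\ sigmaP (Tng tau a b) = sigma1 (Trg tau a b)
     /\ sigma1 (Trg tau a b)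
        = [set (k%:~R * (k%:~R + a + b + 1)) | k in I1 (Trg tau a b)]).
Proof.
move=> tauP _.
have fdegE P : Ppm P -> fdeg (polyF P / polyF tau) = ((size P).-1)%:Z - ((size tau).-1)%:Z.
  by move=> PP; apply: fdeg_div_tau => //; exact: Ppm_neq0.
split=> [pi lam qp | aN bN].
  have [P [PP eig] piE] := qpeig_eigpoly tauP qp.
  exists P, (size P).-1; do !split => //; first by exists lam.
  - by exists pi, lam.
  - by rewrite piE fdegE.
have lamE pi lam : is_qpeig (Trg tau a b) pi lam ->
    lam = (fdeg pi)%:~R * ((fdeg pi)%:~R + a + b + 1).
  case/(qpeig_eigpoly tauP) => P [PP eig] ->; rewrite fdegE // intrB.
  exact: eigpoly_eigenvalue eig.
split; [|split]; apply/seteqP; split.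
- move=> _ [pi [lam [qp <-]]]; have [P [PP eig] ->] := qpeig_eigpoly tauP qp.
  by exists (size P).-1; [exists P, lam | rewrite fdegE].
- move=> _ [n [P [lam [eig <-]]] <-]; have PP := eigpoly_Ppm tauP aN bN eig.
  by exists (polyF P / polyF tau), lam; rewrite fdegE //; split=> //; exact: eigpoly_qpeig.
- move=> mu [P eig]; have PP := eigpoly_Ppm tauP aN bN eig.
  by exists (polyF P / polyF tau); apply: eigpoly_qpeig.
- by move=> mu [pi /(qpeig_eigpoly tauP) [P [_ eig] _]]; exists P.
- by move=> mu [pi qp]; exists (fdeg pi); [exists pi, mu | rewrite -(lamE _ _ qp)].
- by move=> _ [_ [pi [lam [qp <-]]] <-]; exists pi; rewrite -(lamE _ _ qp).
Qed.
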